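(* Consider the client selection problem and the COCS policy described in the context, run with input parameters $K(t)=t^{z}\log(t)$ and $h_T=\lceil T^{\gamma}\rceil$, where $0<z<1$ and $0<\gamma<\frac12$. Then the expected regret incurred in exploration rounds satisfies $$\mathbb{E}[R_{\text{explore}}(T)]\le \frac{4N^2MB}{c^{\min}}\left(T^{z+2\gamma}\log(T)+T^{2\gamma}\right),$$ where $c^{\min}=\min_{n,t}c_n(y_n^t)$.
   Context: Setting. There are $N$ clients indexed by $\mathcal N=\{1,\dots,N\}$, $M$ edge servers (ESs) indexed by $\mathcal M=\{1,\dots,M\}$, and rounds $t=1,\dots,T$. In round $t$, ES $m$ can communicate with a set $\mathcal N_m^t\subseteq\mathcal N$ of clients (these sets may overlap). Each client $n$ reveals computation resources $y_n^t$ and charges a cost $c_n(y_n^t)>0$, with $c_n$ nondecreasing; $c^{\min}=\min_{n,t}c_n(y_n^t)$. Each ES has budget $B>0$. A feasible client selection decision in round $t$ is $\bm s^t=(\bm s_1^t,\dots,\bm s_M^t)$ with $\bm s_m^t\subseteq\mathcal N_m^t$, $\sum_{n\in\bm s_m^t}c_n(y_n^t)\le B$ for every $m$, and $\bm s_m^t\cap\bm s_{m'}^t=\emptyset$ for $m\neq m'$. Each client-ES pair $(n,m)$ with $n\in\mathcal N_m^t$ has an observed context $\phi_{n,m}^t\in\Phi=[0,1]^2$. If client $n$ is selected by ES $m$ in round $t$, its participation indicator $X_{n,m}^t\in\{0,1\}$ is Bernoulli with mean $p_{n,m}(\phi_{n,m}^t)$, where $p_{n,m}:\Phi\to[0,1]$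 is unknown. The utility is $\mu(\bm s^t;\bm X^t)=\frac1M\sum_{m\in\mathcal M}\sum_{n\in\bm s_m^t}X_{n,m}^t$ (and $\mu(\bm s;\bm p^t)$ is the same expression with $p_{n,m}(\phi^t_{n,m})$ in place of $X^t_{n,m}$). The oracle decision $\bm s^{\mathrm{opt},t}$ maximizes $\mu(\bm s;\bm p^t)$ over feasible decisions. The expected regret of a policy choosing $\bm s^1,\dots,\bm s^T$ is $\mathbb E[R(T)]=\sum_{t=1}^T(\mathbb E[\mu(\bm s^{\mathrm{opt},t};\bm X^t)]-\mathbb E[\mu(\bm s^t;\bm X^t)])$. COCS policy (inputs: increasing function $K$, integer $h_T$). Partition $\Phi$ into $h_T^2$ squares of side $1/h_T$. For each pair $(n,m)$ and square $l$ keep a counter $C_{n,m}(l)$ (initially $0$) and an estimate $\hat p_{n,m}(l)$ equal to the sample mean of the indicators observed when $n$ was selected by $m$ with context in $l$ (initially $0$). In round $t$: observe all contexts, let $l^t_{n,m}$ be the square containing $\phi^t_{n,m}$ and set $\hat X^t_{n,m}=\hat p_{n,m}(l^t_{n,m})$; a pair is under-explored if $C_{n,m}(l^t_{n,m})\le K(t)$. If an under-explored pair exists (exploration round), select a feasible decision that first maximizes the number of selected under-explored clients and then spends the remaining per-ES budget on explored clients so as to maximize $\mu(\cdot;\hat{\bm X}^t)$ (when every ES has under-explored clients, simply a feasible decision of maximum cardinality). Otherwise (exploitation round), select a feasible $\bm s^t$ maximizing $\mu(\bm s;\hat{\bm X}^t)$. At the end of the round, for each selected pair observe $X^t_{n,m}$,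 update $\hat p_{n,m}(l^t_{n,m})$ as a running mean and increment $C_{n,m}(l^t_{n,m})$. $R_{\text{explore}}(T)$ and $R_{\text{exploit}}(T)$ denote the parts of the regret summed over exploration rounds and over exploitation rounds respectively, so $R(T)=R_{\text{explore}}(T)+R_{\text{exploit}}(T)$. *)

From HB Require Import structures.
From mathcomp Require Import all_boot all_order all_algebra.
From mathcomp Require Import all_classical all_reals exp.
Set Implicit Arguments. Unset Strict Implicit. Unset Printing Implicit Defensive.
Import Order.TTheory GRing.Theory Num.Theory.
Local Open Scope ring_scope.

Section COCS.
Variables (R : realType) (N M : nat).

(* A client selection decision: for each ES m, the set s m of clients it selects. *)
Definition decision := 'I_M -> {set 'I_N}.

(* Feasibility in a round, given the communication sets Nt m = N_m^t and the
   client costs cost n = c_n(y_n^t). *)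
Definition feasible (Nt : decision) (cost : 'I_N -> R) (B : R) (s : decision) : Prop :=
  [/\ forall m, s m \subset Nt m,
      forall m, \sum_(n in s m) cost n <= B &
      forall m m', m != m' -> [disjoint s m & s m']].

Definition util (s : decision) (v : 'I_N -> 'I_M -> R) : R :=
  M%:R^-1 * \sum_(m < M) \sum_(n in s m) v n m.

Definition is_oracle (Nt : decision) (cost : 'I_N -> R) (B : R)
    (pt : 'I_N -> 'I_M -> R) (s : decision) : Prop :=
  feasible Nt cost B s /\ forall s', feasible Nt cost B s' -> util s' pt <= util s pt.

Definition is_cmin (T : nat) (c : 'I_N -> R -> R) (y : nat -> 'I_N -> R) (cm : R) : Prop :=
  (forall n t, (1 <= t <= T)%N -> cm <= c n (y t n)) /\
  (exists n t, (1 <= t <= T)%N /\ c n (y t n) = cm).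

Definition hT (T : nat) (gamma : R) : nat := `|Num.ceil ((T%:R : R) `^ gamma)|%N.

Definition Kfun (z : R) (t : nat) : R := (t%:R : R) `^ z * ln (t%:R : R).

(* Index of the square of side 1/h containing x in [0,1]^2 (squares indexed by
   (i,j) with 0 <= i,j < h; points on the right/top boundary 1 go to the last square). *)
Definition cell (h : nat) (x : R * R) : nat * nat :=
  (minn (Num.truncn (x.1 * h%:R)) h.-1, minn (Num.truncn (x.2 * h%:R)) h.-1).

Definition in_unit_square (x : R * R) : Prop := 0 <= x.1 <= 1 /\ 0 <= x.2 <= 1.

Section Run.
(* A single realization: decisions s t, contexts phi t n m, indicators X t n m. *)
Variables (h : nat) (phi : nat -> 'I_N -> 'I_M -> R * R)
          (s : nat -> decision) (X : nat -> 'I_N -> 'I_M -> R).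

Definition hit (n : 'I_N) (m : 'I_M) (l : nat * nat) (tau : nat) : bool :=
  (n \in s tau m) && (cell h (phi tau n m) == l).

Definition counter (t : nat) (n : 'I_N) (m : 'I_M) (l : nat * nat) : nat :=
  size [seq tau <- iota 1 t.-1 | hit n m l tau].

Definition estimate (t : nat) (n : 'I_N) (m : 'I_M) (l : nat * nat) : R :=
  if counter t n m l == 0%N then 0
  else (\sum_(tau <- iota 1 t.-1 | hit n m l tau) X tau n m) / (counter t n m l)%:R.

Definition Xhat (t : nat) (n : 'I_N) (m : 'I_M) : R :=
  estimate t n m (cell h (phi t n m)).

Variables (K : nat -> R) (Nset : nat -> decision).

Definition under_explored (t : nat) (n : 'I_N) (m : 'I_M) : bool :=
  (n \in Nset t m) && ((counter t n m (cell h (phi t n m)))%:R <= K t).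

Definition exploration_round (t : nat) : bool :=
  [exists m, exists n, under_explored t n m].

Definition n_under (t : nat) (d : decision) : nat :=
  \sum_(m < M) #|[set n in d m | under_explored t n m]|.

Variables (cost : nat -> 'I_N -> R) (B : R).

Definition cocs_round (t : nat) : Prop :=
  let D := feasible (Nset t) (cost t) B in
  if exploration_round t then
    [/\ D (s t),
        (forall d, D d -> (n_under t d <= n_under t (s t))%N) &
        (~~ [forall m, exists n, under_explored t n m] ->
         forall d, D d ->
           (forall m, [set n in d m | under_explored t n m]
                      = [set n in s t m | under_explored t n m]) ->
           util d (Xhat t) <= util (s t) (Xhat t))]
  else D (s t) /\ (forall d, D d -> util d (Xhat t) <= util (s t) (Xhat t)).

End Run.

Definition regret_explore (T : nat) (h : nat) (phi : nat -> 'I_N -> 'I_M -> R * R)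
    (K : nat -> R) (Nset : nat -> decision) (sopt : nat -> decision)
    (s : nat -> decision) (X : nat -> 'I_N -> 'I_M -> R) : R :=
  \sum_(1 <= t < T.+1 | exploration_round h phi s K Nset t)
     (util (sopt t) (X t) - util (s t) (X t)).

End COCS.

From HB Require Import structures.
From mathcomp Require Import all_boot all_order all_algebra.
From mathcomp Require Import all_classical all_reals exp.
From mathcomp Require Import ring.

(* An exploration round costs at most B / c^min regret, because any feasible
   decision selects at most B / c^min clients per edge server and indicators lie
   in {0, 1}.  In every exploration round COCS selects some under-explored pair
   (n, m): a one-client decision already selects one, and COCS maximizes their
   number.  For a fixed triple (n, m, square l) the counter C_{n,m}(l) grows each
   time the triple is selected, so it is selected while under-explored at most
   K(T) + 1 times.  There are N M h_T^2 <= 4 N M T^(2 gamma) triples, hence at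
   most 4 N M T^(2 gamma) (K(T) + 1) exploration rounds. *)

Set Implicit Arguments. Unset Strict Implicit. Unset Printing Implicit Defensive.
Import Order.TTheory GRing.Theory Num.Theory.
Local Open Scope ring_scope.

Lemma count_le_sum_count (I : finType) (T : eqType) (a : pred T) (b : I -> pred T)
    (r : seq T) :
  {in r, forall x, a x -> exists i, b i x} -> (count a r <= \sum_i count (b i) r)%N.
Proof.
elim: r => [|x r IHr] cover /=; first by rewrite big1.
rewrite big_split /= leq_add ?IHr //; last first.
  by move=> y y_r; apply: cover; rewrite inE y_r orbT.
case: (boolP (a x)) => // /(cover x (mem_head x r))[i bix].
by rewrite (bigD1 i) //= bix.
Qed.

Lemma count_capped_le (R : numDomainType) (a hit : pred nat) (k : R) (T : nat) :
  0 <= k -> subpred a hit ->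
  (forall t, (1 <= t <= T)%N -> a t -> (count hit (iota 1 t.-1))%:R <= k) ->
  (count a (iota 1 T))%:R <= k + 1.
Proof.
move=> k_ge0 a_hit; elim: T => [|T IHT] capped; first by rewrite addr_ge0.
rewrite -[X in iota 1 X]addn1 iotaD count_cat /= addn0 add1n natrD.
case: (boolP (a T.+1)) => aT /=; last first.
  by rewrite addr0 IHT // => t /andP[t_ge1 tT]; apply: capped; rewrite t_ge1 ltnW.
rewrite lerD2r (le_trans _ (capped T.+1 _ aT)) ?leqnn //.
by rewrite ler_nat sub_count.
Qed.

Lemma expectation_le (R : numDomainType) (Omega : finType) (P f : Omega -> R) (c : R) :
  (forall w, 0 <= P w) -> \sum_w P w = 1 -> (forall w, f w <= c) ->
  \sum_w P w * f w <= c.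
Proof.
move=> P_ge0 P_sum1 f_le; rewrite -[leRHS]mul1r -P_sum1 mulr_suml.
by apply: ler_sum => w _; rewrite ler_wpM2l.
Qed.

Section Utility.
Variables (R : realType) (N M : nat).

Lemma util_ge0 (d : decision N M) (v : 'I_N -> 'I_M -> R) :
  (forall n m, 0 <= v n m) -> 0 <= util d v.
Proof.
move=> v_ge0; rewrite /util mulr_ge0 ?invr_ge0 //.
by apply: sumr_ge0 => m _; apply: sumr_ge0.
Qed.

Lemma util_le_budget (Nt d : decision N M) (cost : 'I_N -> R) (B cmin : R)
    (v : 'I_N -> 'I_M -> R) :
  feasible Nt cost B d -> 0 < cmin -> 0 <= B -> (forall n, cmin <= cost n) ->
  (forall n m, v n m <= 1) -> util d v <= B / cmin.
Proof.
move=> [_ within_budget _] cmin_gt0 B_ge0 cmin_le v_le1.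
have per_ES m : \sum_(n in d m) v n m <= B / cmin.
  rewrite ler_pdivlMr // mulr_suml (le_trans _ (within_budget m)) //.
  apply: ler_sum => n _; apply: le_trans (cmin_le n).
  exact: ler_piMl (ltW cmin_gt0) (v_le1 n m).
rewrite /util; have [M0|M_gt0] := posnP M.
  by rewrite [in M%:R]M0 mulr0n invr0 mul0r divr_ge0 // ltW.
rewrite ler_pdivrMl ?ltr0n //.
by rewrite mulr_natl -[X in _ *+ X]card_ord -sumr_const ler_sum.
Qed.

Definition single_decision (m0 : 'I_M) (n0 : 'I_N) : decision N M :=
  fun m => if m == m0 then [set n0] else finset.set0.

Lemma single_decision_feasible (Nt : decision N M) (cost : 'I_N -> R) (B : R)
    (m0 : 'I_M) (n0 : 'I_N) :
  n0 \in Nt m0 -> 0 <= B -> cost n0 <= B -> feasible Nt cost B (single_decision m0 n0).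
Proof.
move=> n0_in B_ge0 cost_le; rewrite /single_decision; split=> [m|m|m m' mm'].
- by case: eqP => [->|_]; rewrite ?finset.sub1set ?finset.sub0set.
- by case: eqP => _; rewrite ?big_set1 ?big_set0.
- case: (eqVneq m m0) mm' => [-> m0m'|_ _] /=.
    rewrite [m' == m0]eq_sym (negbTE m0m') disjoint_sym.
    by rewrite finset.disjoints_subset finset.sub0set.
  by rewrite finset.disjoints_subset finset.sub0set.
Qed.

End Utility.

Lemma regret_explore_le_count (R : realType) (N M T h : nat)
    (phi : nat -> 'I_N -> 'I_M -> R * R) (K : nat -> R) (Nset sopt s : nat -> decision N M)
    (X : nat -> 'I_N -> 'I_M -> R) (cost : nat -> 'I_N -> R) (B cmin : R) :
  0 < cmin -> 0 <= B -> (forall t n, (1 <= t <= T)%N -> cmin <= cost t n) ->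
  (forall t, (1 <= t <= T)%N -> feasible (Nset t) (cost t) B (sopt t)) ->
  (forall t n m, X t n m = 0 \/ X t n m = 1) ->
  regret_explore T h phi K Nset sopt s X
    <= B / cmin * (count (exploration_round h phi s K Nset) (iota 1 T))%:R.
Proof.
move=> cmin_gt0 B_ge0 cmin_le sopt_feas X01; rewrite /regret_explore.
apply: le_trans (_ : _ <= \sum_(1 <= t < T.+1 | exploration_round h phi s K Nset t)
                            (B / cmin)) _; last first.
  by rewrite big_const_seq iter_addr_0 /index_iota subn1 mulr_natr.
rewrite big_nat_cond [leRHS]big_nat_cond; apply: ler_sum => t /andP[/andP[t_ge1 t_le] _].
have t_in : (1 <= t <= T)%N by rewrite t_ge1 -ltnS.
have X_le1 n m : X t n m <= 1 by case: (X01 t n m) => ->; rewrite ?ler01.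
have X_ge0 n m : 0 <= X t n m by case: (X01 t n m) => ->; rewrite ?ler01.
rewrite lerBlDr -[leLHS]addr0 lerD ?util_ge0 //.
exact: util_le_budget (sopt_feas t t_in) cmin_gt0 B_ge0 (cmin_le t ^~ t_in) X_le1.
Qed.

Section Inputs.
Variable R : realType.

Lemma Kfun_ge0 (z : R) (t : nat) : (1 <= t)%N -> 0 <= Kfun z t.
Proof. by move=> t_ge1; rewrite /Kfun mulr_ge0 ?powR_ge0 // ln_ge0 // ler1n. Qed.

Lemma Kfun_le (z : R) (t T : nat) : 0 <= z -> (1 <= t <= T)%N -> Kfun z t <= Kfun z T.
Proof.
move=> z_ge0 /andP[t_ge1 tT]; rewrite /Kfun.
apply: ler_pM; rewrite ?powR_ge0 ?ln_ge0 ?ler1n //.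
  by rewrite ge0_ler_powR ?nnegrE ?ler_nat.
by rewrite ler_ln ?posrE ?ltr0n ?ler_nat // (leq_trans t_ge1).
Qed.

Lemma hT_gt0 (T : nat) (gamma : R) : (1 <= T)%N -> (0 < hT T gamma)%N.
Proof.
move=> T_ge1; rewrite /hT absz_gt0 gt_eqF // ceil_gt0.
by rewrite powR_gt0 // ltr0n.
Qed.

Lemma hT_le (T : nat) (gamma : R) : (1 <= T)%N -> 0 <= gamma ->
  (hT T gamma)%:R <= 2 * (T%:R : R) `^ gamma.
Proof.
move=> T_ge1 gamma_ge0; set x := (T%:R : R) `^ gamma.
have x_ge1 : 1 <= x by rewrite -[leLHS](powRr0 (T%:R : R)) ler_powR ?ler1n.
have ceil_gt0 : 0 < Num.ceil x by rewrite ceil_gt0 (lt_le_trans ltr01).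
have ceil_lt : (Num.ceil x)%:~R < x + 1.
  by rewrite -ltrBlDr -[1]/(1%:~R) -intrB ceilB1_lt.
rewrite /hT natr_absz gtr0_norm // mulr2n mulrDl mul1r.
by rewrite (le_trans (ltW ceil_lt)) ?lerD2l.
Qed.

(* [cell] clamps indices to [h.-1], so even for [h = 0] there is one index. *)
Lemma cell_lt (h : nat) (x : R * R) :
  ((cell h x).1 < h.-1.+1)%N /\ ((cell h x).2 < h.-1.+1)%N.
Proof. by rewrite /cell /= !ltnS !geq_minr. Qed.

Lemma powR_Kfun_split (z gamma : R) (T : nat) : (1 <= T)%N ->
  (T%:R : R) `^ (z + 2%:R * gamma) * ln (T%:R : R) + (T%:R : R) `^ (2%:R * gamma)
  = ((T%:R : R) `^ gamma) ^+ 2 * (Kfun z T + 1).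
Proof.
move=> T_ge1; have T_neq0 : (T%:R : R) != 0 by rewrite pnatr_eq0 -lt0n.
by rewrite /Kfun mulr_natl mulr2n !powRD ?T_neq0 ?implybT //; ring.
Qed.

Lemma natr_cells_le (N M h : nat) (a : R) : h%:R <= 2 * a ->
  ((N * M * (h * h))%:R : R) <= 4 * (N ^ 2)%:R * M%:R * a ^+ 2.
Proof.
move=> h_le.
rewrite [leRHS](_ : _ = (N ^ 2)%:R * M%:R * (2 * a * (2 * a))); last by ring.
rewrite !natrM; apply: ler_pM; rewrite ?mulr_ge0 ?ler0n ?ler_pM ?ler0n //.
by rewrite -natrM ler_nat; case: (N) => // n; rewrite leq_pmulr.
Qed.

End Inputs.

Section Exploration.
Variables (R : realType) (N M h : nat) (phi : nat -> 'I_N -> 'I_M -> R * R).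
Variables (s Nset : nat -> decision N M) (K : nat -> R).

Local Notation under_explored := (under_explored h phi s K Nset).
Local Notation exploration_round := (exploration_round h phi s K Nset).

Lemma exploration_round_selects_under_explored (X : nat -> 'I_N -> 'I_M -> R)
    (cost : nat -> 'I_N -> R) (B : R) (t : nat) :
  cocs_round h phi s X K Nset cost B t -> 0 <= B -> (forall n, cost t n <= B) ->
  exploration_round t -> exists m n, (n \in s t m) && under_explored t n m.
Proof.
move=> + B_ge0 cost_le explore; rewrite /cocs_round /= explore => -[_ max_under _].
case/existsP: explore => m0 /existsP[n0 under0].
have single_feas : feasible (Nset t) (cost t) B (single_decision m0 n0).
  by apply: single_decision_feasible; case/andP: under0.
have := max_under _ single_feas.
rewrite /n_under (bigD1 m0) //= {1}/single_decision eqxx.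
move=> le_sum; have : (0 < \sum_(m < M) #|[set n in s t m | under_explored t n m]|)%N.
  apply: leq_trans le_sum; apply: leq_trans (leq_addr _ _).
  by apply/card_gt0P; exists n0; rewrite !inE eqxx.
rewrite lt0n sum_nat_eq0 => /forallPn[m]; rewrite /= -lt0n => /card_gt0P[n].
by rewrite inE => selected; exists m, n.
Qed.

Lemma count_exploration_rounds_le (X : nat -> 'I_N -> 'I_M -> R)
    (cost : nat -> 'I_N -> R) (B : R) (T : nat) :
  0 <= B -> 0 <= K T -> (forall t, (1 <= t <= T)%N -> K t <= K T) ->
  (forall t n, (1 <= t <= T)%N -> cost t n <= B) ->
  (forall t, (1 <= t <= T)%N -> cocs_round h phi s X K Nset cost B t) ->
  (count exploration_round (iota 1 T))%:R
    <= (N * M * (h.-1.+1 * h.-1.+1))%:R * (K T + 1).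
Proof.
move=> B_ge0 KT_ge0 K_le cost_le cocs.
pose key := ('I_N * 'I_M * ('I_h.-1.+1 * 'I_h.-1.+1))%type.
pose cell_of (k : key) := (val k.2.1, val k.2.2).
pose selected_under (k : key) t := [&& k.1.1 \in s t k.1.2,
  cell h (phi t k.1.1 k.1.2) == cell_of k &
  (counter h phi s t k.1.1 k.1.2 (cell_of k))%:R <= K t].
have cover : {in iota 1 T, forall t, exploration_round t ->
    exists k, selected_under k t}.
  move=> t; rewrite mem_iota add1n ltnS => t_in explore.
  have [m [n /and3P[selected _ capped]]] :=
    exploration_round_selects_under_explored (cocs t t_in) B_ge0 (cost_le t ^~ t_in) explore.
  have := cell_lt h (phi t n m); case cell_nm: (cell h (phi t n m)) => [i j] /= [lt_i lt_j].
  exists (n, m, (inord i, inord j)).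
  by rewrite /selected_under /cell_of /= !inordK // cell_nm selected eqxx -cell_nm.
apply: le_trans (_ : _ <= (\sum_k count (selected_under k) (iota 1 T))%:R) _.
  by rewrite ler_nat count_le_sum_count.
have -> : (N * M * (h.-1.+1 * h.-1.+1))%N = #|{: key}| by rewrite !card_prod !card_ord.
rewrite natr_sum mulr_natl -sumr_const; apply: ler_sum => k _.
apply: (@count_capped_le _ _ (hit h phi s k.1.1 k.1.2 (cell_of k))) => //.
- by move=> t /and3P[sel cell_t _]; rewrite /hit sel cell_t.
- move=> t t_in /and3P[_ _]; rewrite /counter size_filter => capped.
  exact: le_trans capped (K_le t t_in).
Qed.

End Exploration.

Theorem lemma1 (R : realType) (N M T : nat)
    (Nset : nat -> 'I_M -> {set 'I_N}) (y : nat -> 'I_N -> R) (c : 'I_N -> R -> R)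
    (B : R) (phi : nat -> 'I_N -> 'I_M -> R * R) (p : 'I_N -> 'I_M -> R * R -> R)
    (z gamma cmin : R)
    (Omega : finType) (P : Omega -> R) (X : nat -> 'I_N -> 'I_M -> Omega -> R)
    (sopt : nat -> 'I_M -> {set 'I_N}) (s : Omega -> nat -> 'I_M -> {set 'I_N}) :
  0 < B ->
  (forall n, {homo c n : a b / a <= b}) ->
  (forall t n, (1 <= t <= T)%N -> 0 < c n (y t n)) ->
  (forall t n, (1 <= t <= T)%N -> c n (y t n) <= B) ->
  is_cmin T c y cmin ->
  (forall t n m, in_unit_square (phi t n m)) ->
  (forall n m x, 0 <= p n m x <= 1) ->
  0 < z < 1 -> 0 < gamma < 2^-1 ->
  (* probability distribution on the finite outcome space *)
  (forall w, 0 <= P w) -> \sum_w P w = 1 ->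
  (* participation indicators: {0,1}-valued, Bernoulli with mean p_{n,m}(phi^t_{n,m}) *)
  (forall t n m w, X t n m w = 0 \/ X t n m w = 1) ->
  (forall t n m, (1 <= t <= T)%N -> n \in Nset t m ->
     \sum_w P w * X t n m w = p n m (phi t n m)) ->
  (* oracle decisions *)
  (forall t, (1 <= t <= T)%N ->
     is_oracle (Nset t) (fun n => c n (y t n)) B (fun n m => p n m (phi t n m)) (sopt t)) ->
  (* COCS with K(t) = t^z log t and h_T = ceil(T^gamma), in every realization *)
  (forall w t, (1 <= t <= T)%N ->
     cocs_round (hT T gamma) phi (s w) (fun tau n m => X tau n m w)
       (Kfun z) Nset (fun tau n => c n (y tau n)) B t) ->
  \sum_w P w * regret_explore T (hT T gamma) phi (Kfun z) Nset sopt (s w)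
                  (fun tau n m => X tau n m w)
  <= 4%:R * (N ^ 2)%:R * M%:R * B / cmin
     * ((T%:R : R) `^ (z + 2%:R * gamma) * ln (T%:R : R) + (T%:R : R) `^ (2%:R * gamma)).
Proof.
move=> B_gt0 _ cost_gt0 cost_le [cmin_le [n0 [t0 [t0_in cmin_eq]]]] _ _
  /andP[z_gt0 _] /andP[gamma_gt0 _] P_ge0 P_sum1 X01 _ oracle cocs.
have T_ge1 : (1 <= T)%N by case/andP: t0_in; apply: leq_trans.
have cmin_gt0 : 0 < cmin by rewrite -cmin_eq cost_gt0.
have K_le t : (1 <= t <= T)%N -> Kfun z t <= Kfun z T by apply: Kfun_le; rewrite ltW.
have h_le := hT_le (gamma := gamma) T_ge1 (ltW gamma_gt0).
set h := hT T gamma in h_le *; set a := (T%:R : R) `^ gamma in h_le *.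
rewrite powR_Kfun_split // -/a.
apply: expectation_le => // w.
apply: le_trans (regret_explore_le_count _ _ _ _ (cost := fun t n => c n (y t n))
  cmin_gt0 (ltW B_gt0) (fun t n t_in => cmin_le n t t_in) (fun t t_in => proj1 (oracle t t_in))
  (fun t n m => X01 t n m w)) _.
have := count_exploration_rounds_le (ltW B_gt0) (Kfun_ge0 z T_ge1) K_le
  cost_le (cocs w).
rewrite prednK ?hT_gt0 // => count_le.
rewrite [leRHS](_ : _ = B / cmin * (4 * (N ^ 2)%:R * M%:R * a ^+ 2 * (Kfun z T + 1)));
  last by ring.
apply: ler_wpM2l; first by rewrite divr_ge0 ?ltW.
apply: le_trans count_le _; apply: ler_wpM2r (natr_cells_le N M h_le).
by rewrite addr_ge0 ?Kfun_ge0.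
Qed.
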